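(* Let $A$ be an infinite set and let $I$ be a set. Let $\mathcal{B}\subseteq\Omega(A)^{I}$ be a subalgebra of the direct power $\Omega(A)^{I}$. Then there is a filter $F$ on the partition lattice $\Pi(I)$ such that for every $f\in A^{I}$, we have $f\in\mathcal{B}$ if and only if $\Pi(f)\in F$.
   Context: For each $a\in A$ let $\hat{a}$ be a constant symbol, and for each $n\geq1$ and each function $f:A^{n}\to A$ let $\hat{f}$ be an $n$-ary operation symbol. $\Omega(A)$ is the algebra with universe $A$ in this signature in which $\hat{a}$ is interpreted as $a$ and $\hat{f}$ is interpreted as $f$ (so every element is a fundamental constant and every finitary function on $A$ is a fundamental operation). $\Pi(I)$ is the lattice of partitions of $I$ (partitions have nonempty blocks), ordered so that $P\preceq Q$ means $P$ refines $Q$; $P\wedge Q$ is the common refinement. For a function $f:I\to X$, $\Pi(f)=\{f^{-1}(\{x\}) : x\in X\}\setminus\{\emptyset\}$ is the partition of $I$ into the nonempty fibers of $f$. *)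

From mathcomp Require Import all_boot.
From mathcomp Require Import boolp classical_sets cardinality.
Set Implicit Arguments. Unset Strict Implicit. Unset Printing Implicit Defensive.
Local Open Scope classical_set_scope.

(* A subalgebra of the direct power Omega(A)^I: a set of functions I -> A
   closed under every fundamental operation of Omega(A), applied coordinatewise:
   every constant a (the constant function), and every n-ary f : A^n -> A,
   n >= 1 (A^n rendered as 'I_n -> A). *)
Definition Omega_power_subalgebra (A I : Type) (B : set (I -> A)) : Prop :=
  (forall a : A, B (fun _ => a)) /\
  (forall (n : nat) (f : ('I_n -> A) -> A) (bs : 'I_n -> (I -> A)),
      (0 < n)%N -> (forall k, B (bs k)) -> B (fun i => f (fun k => bs k i))).

Definition is_partition (I : Type) (P : set (set I)) : Prop :=
  (forall S, P S -> S !=set0) /\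
  (forall S T, P S -> P T -> S `&` T !=set0 -> S = T) /\
  (forall i : I, exists S, P S /\ S i).

Definition refines (I : Type) (P Q : set (set I)) : Prop :=
  forall S, P S -> exists T, Q T /\ S `<=` T.

Definition pmeet (I : Type) (P Q : set (set I)) : set (set I) :=
  [set S | S !=set0 /\ exists U V, P U /\ Q V /\ S = U `&` V].

Definition partition_filter (I : Type) (F : set (set (set I))) : Prop :=
  (forall P, F P -> is_partition P) /\
  (exists P, F P) /\
  (forall P Q, F P -> is_partition Q -> refines P Q -> F Q) /\
  (forall P Q, F P -> F Q -> F (pmeet P Q)).

Definition Pi_of (I X : Type) (f : I -> X) : set (set I) :=
  [set S | S !=set0 /\ exists x, S = f @^-1` [set x]].

From mathcomp Require Import all_boot.
From mathcomp Require Import boolp classical_sets cardinality.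
Set Implicit Arguments. Unset Strict Implicit. Unset Printing Implicit Defensive.
Local Open Scope classical_set_scope.

(* The filter consists of the partitions coarser than the joint kernel
   Π(i ↦ (f_1 i, ..., f_n i)) of some finite family f_1, ..., f_n of members
   of B.  Meets are handled by concatenating families.  Conversely, if Π(f)
   lies above such a kernel then f factors through the tuple map, f = h ∘ ⟨f_k⟩,
   and h is a fundamental n-ary operation of Ω(A), so f ∈ B.  Infiniteness of A
   is only needed to have an element of A at hand. *)

Lemma is_partition_Pi_of (I X : Type) (f : I -> X) : is_partition (Pi_of f).
Proof.
split; first by move=> S [].
split.
- by move=> S T [_ [x ->]] [_ [y ->]] [i [/= <- <-]].
- move=> i; exists (f @^-1` [set f i]); split=> //.
  by split; [exists i | exists (f i)].
Qed.

Lemma refines_trans (I : Type) (P Q R : set (set I)) :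
  refines P Q -> refines Q R -> refines P R.
Proof.
move=> PQ QR S /PQ [T [QT ST]]; have [U [RU TU]] := QR T QT.
by exists U; split=> // i /ST /TU.
Qed.

Lemma refines_Pi_of_comp (I X Y : Type) (f : I -> X) (g : X -> Y) :
  refines (Pi_of f) (Pi_of (g \o f)).
Proof.
move=> S [[i Si] [x defS]]; move: Si; rewrite defS => fi.
exists ((g \o f) @^-1` [set g x]).
split; first by split; [exists i; exact: (congr1 g fi) | exists (g x)].
by move=> j /= ->.
Qed.

Lemma is_partition_pmeet (I : Type) (P Q : set (set I)) :
  is_partition P -> is_partition Q -> is_partition (pmeet P Q).
Proof.
move=> [_ [Pdisj Pcov]] [_ [Qdisj Qcov]].
split; first by move=> S [].
split.
- move=> _ _ [_ [U [V [PU [QV ->]]]]] [_ [U' [V' [PU' [QV' ->]]]]].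
  move=> [i [[Ui Vi] [U'i V'i]]].
  have -> : U = U' by apply: Pdisj => //; exists i.
  by have -> : V = V' by apply: Qdisj => //; exists i.
- move=> i; have [U [PU Ui]] := Pcov i; have [V [QV Vi]] := Qcov i.
  by exists (U `&` V); split=> //; split; [exists i | exists U, V].
Qed.

Lemma refines_pmeet (I : Type) (R P Q : set (set I)) :
  is_partition R -> refines R P -> refines R Q -> refines R (pmeet P Q).
Proof.
move=> [Rne _] RP RQ S RS.
have [U [PU SU]] := RP S RS; have [V [QV SV]] := RQ S RS.
have [i Si] := Rne S RS.
exists (U `&` V); split; last by move=> j Sj; split; [apply: SU | apply: SV].
by split; [exists i; split; [apply: SU | apply: SV] | exists U, V].
Qed.

Lemma Pi_of_factor (I X Y : Type) (g : I -> X) (f : I -> Y) (y0 : Y) :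
  refines (Pi_of g) (Pi_of f) -> exists h : X -> Y, f = h \o g.
Proof.
move=> gf.
have f_kernel i j : g i = g j -> f i = f j.
  move=> gij; have [|_ [[_ [y ->]] sub]] := gf (g @^-1` [set g i]).
    by split; [exists i | exists (g i)].
  by rewrite (sub i erefl) (sub j (esym gij)).
have hx x : exists y, forall i, g i = x -> f i = y.
  have [[i gi]|noi] := pselect (exists i, g i = x).
    by exists (f i) => j gj; apply: f_kernel; rewrite gj.
  by exists y0 => i gi; case: noi; exists i.
have [h fh] := choice hx.
by exists h; apply: funext => i; apply: fh.
Qed.

Lemma infinite_setT_inhabited (A : Type) : infinite_set [set: A] -> inhabited A.
Proof.
move=> Ainf; apply: contrapT => noA; apply: Ainf.
suff -> : [set: A] = set0 by exact: finite_set0.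
by apply/seteqP; split=> // a _; apply: noA.
Qed.

Section KernelFilter.

Variables (A I : Type) (B : set (I -> A)).

Definition tuple_map (n : nat) (fs : 'I_n -> I -> A) : I -> 'I_n -> A :=
  fun i k => fs k i.

Definition kernel_filter (P : set (set I)) : Prop :=
  is_partition P /\ exists n (fs : 'I_n -> I -> A),
    [/\ (0 < n)%N, forall k, B (fs k) & refines (Pi_of (tuple_map fs)) P].

Definition tuple_cat (n m : nat) (fs : 'I_n -> I -> A) (gs : 'I_m -> I -> A)
    : 'I_(n + m) -> I -> A :=
  fun k => match split k with inl a => fs a | inr b => gs b end.

Lemma tuple_map_cat_l (n m : nat) (fs : 'I_n -> I -> A) (gs : 'I_m -> I -> A) :
  tuple_map fs = (fun v k => v (unsplit (inl k))) \o tuple_map (tuple_cat fs gs).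
Proof.
apply: funext => i; apply: funext => k.
by rewrite /tuple_map /tuple_cat /= (unsplitK (inl k : 'I_n + 'I_m)).
Qed.

Lemma tuple_map_cat_r (n m : nat) (fs : 'I_n -> I -> A) (gs : 'I_m -> I -> A) :
  tuple_map gs = (fun v k => v (unsplit (inr k))) \o tuple_map (tuple_cat fs gs).
Proof.
apply: funext => i; apply: funext => k.
by rewrite /tuple_map /tuple_cat /= (unsplitK (inr k : 'I_n + 'I_m)).
Qed.

Lemma kernel_filter_Pi_of (f : I -> A) : B f -> kernel_filter (Pi_of f).
Proof.
move=> Bf; split; first exact: is_partition_Pi_of.
exists 1%N, (fun _ => f); split=> //.
have -> : Pi_of f = Pi_of ((fun v => v ord0) \o tuple_map (fun _ : 'I_1 => f)) by [].
exact: refines_Pi_of_comp.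
Qed.

Lemma kernel_filter_pmeet (P Q : set (set I)) :
  kernel_filter P -> kernel_filter Q -> kernel_filter (pmeet P Q).
Proof.
move=> [Ppart [n [fs [n_gt0 Bfs fsP]]]] [Qpart [m [gs [_ Bgs gsQ]]]].
split; first exact: is_partition_pmeet.
exists (n + m)%N, (tuple_cat fs gs); split.
- by rewrite addn_gt0 n_gt0.
- by move=> k; rewrite /tuple_cat; case: (split k).
apply: refines_pmeet; first exact: is_partition_Pi_of.
- apply: refines_trans _ fsP.
  rewrite [in X in refines _ X](tuple_map_cat_l fs gs).
  exact: refines_Pi_of_comp.
- apply: refines_trans _ gsQ.
  rewrite [in X in refines _ X](tuple_map_cat_r fs gs).
  exact: refines_Pi_of_comp.
Qed.

Hypothesis B_subalgebra : Omega_power_subalgebra B.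

Lemma kernel_filter_Pi_ofP (a0 : A) (f : I -> A) :
  kernel_filter (Pi_of f) -> B f.
Proof.
move=> [_ [n [fs [n_gt0 Bfs fsf]]]].
have [h ->] := Pi_of_factor a0 fsf.
exact: B_subalgebra.2.
Qed.

Lemma partition_filter_kernel_filter (a0 : A) : partition_filter kernel_filter.
Proof.
split; first by move=> P [].
split.
  by exists (Pi_of (fun _ : I => a0)); apply/kernel_filter_Pi_of/B_subalgebra.1.
split; last exact: kernel_filter_pmeet.
move=> P Q [_ [n [fs [n_gt0 Bfs fsP]]]] Qpart PQ; split=> //.
by exists n, fs; split=> //; apply: refines_trans fsP PQ.
Qed.

End KernelFilter.

Theorem mainTheorem1 (A I : Type) (B : set (I -> A)) :
  infinite_set [set: A] ->
  Omega_power_subalgebra B ->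
  exists F : set (set (set I)),
    partition_filter F /\ (forall f : I -> A, B f <-> F (Pi_of f)).
Proof.
move=> /infinite_setT_inhabited [a0] B_subalgebra.
exists (kernel_filter B); split; first exact: partition_filter_kernel_filter.
move=> f; split; first exact: kernel_filter_Pi_of.
exact: kernel_filter_Pi_ofP.
Qed.
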